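(* Let $\mathbb{X}$ be a real or complex Banach algebra with identity, $\mathcal{G}$ its group of units, $k\ge1$ an integer, and $g_n:\mathbb{X}\to\mathbb{X}$ ($n\ge0$) functions with $|g_n(\xi)|\le\sigma|\xi|$ for all $\xi\in\mathbb{X}$, all $n$, for some real $\sigma>0$. Let $a_0,\dots,a_k\in\mathbb{X}$ with $a_k\ne0$ and $b\in\mathcal{G}$ with $|b|<1$. Suppose $$a_0b^k+a_1b^{k-1}+\cdots+a_k=b^{k+1}$$ and $$\sum_{i=0}^{k-1}\big|b^{i+1}-a_0b^i-a_1b^{i-1}-\cdots-a_i\big|<1-\sigma.$$ Then every solution of $$x_{n+1}=a_0x_n+a_1x_{n-1}+\cdots+a_kx_{n-k}+g_n(x_n-bx_{n-1}),\quad n\ge0,$$ with initial values in $\mathbb{X}$ converges to $0$.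
   Context: A Banach algebra with identity is a Banach space $\mathbb{X}$ (norm $|\cdot|$) with an associative bilinear multiplication satisfying $|xy|\le|x||y|$ and identity $1$ with $|1|=1$; $\mathcal{G}$ is the set of invertible elements. *)

From Stdlib Require Import Reals.
Open Scope R_scope.

(* A real Banach algebra with identity (a complex Banach algebra is in
   particular a real one by restriction of scalars, with the same norm,
   product and identity). *)
Record BanachAlgebra := {
  carrier :> Type;
  bzero : carrier;
  bone : carrier;
  badd : carrier -> carrier -> carrier;
  bopp : carrier -> carrier;
  bmul : carrier -> carrier -> carrier;
  bscal : R -> carrier -> carrier;
  bnorm : carrier -> R;
  badd_assoc : forall x y z, badd x (badd y z) = badd (badd x y) z;
  badd_comm : forall x y, badd x y = badd y x;
  badd_zero : forall x, badd x bzero = x;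
  badd_opp : forall x, badd x (bopp x) = bzero;
  bscal_one : forall x, bscal 1 x = x;
  bscal_assoc : forall c d x, bscal c (bscal d x) = bscal (c * d) x;
  bscal_addl : forall c d x, bscal (c + d) x = badd (bscal c x) (bscal d x);
  bscal_addr : forall c x y, bscal c (badd x y) = badd (bscal c x) (bscal c y);
  bnorm_ge0 : forall x, 0 <= bnorm x;
  bnorm_eq0 : forall x, bnorm x = 0 -> x = bzero;
  bnorm_triangle : forall x y, bnorm (badd x y) <= bnorm x + bnorm y;
  bnorm_scal : forall c x, bnorm (bscal c x) = Rabs c * bnorm x;
  bcomplete : forall u : nat -> carrier,
    (forall eps, eps > 0 -> exists N, forall m n, (m >= N)%nat -> (n >= N)%nat ->
        bnorm (badd (u m) (bopp (u n))) < eps) ->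
    exists l, forall eps, eps > 0 -> exists N, forall n, (n >= N)%nat ->
        bnorm (badd (u n) (bopp l)) < eps;
  bmul_assoc : forall x y z, bmul x (bmul y z) = bmul (bmul x y) z;
  bmul_addl : forall x y z, bmul (badd x y) z = badd (bmul x z) (bmul y z);
  bmul_addr : forall x y z, bmul x (badd y z) = badd (bmul x y) (bmul x z);
  bmul_scall : forall c x y, bmul (bscal c x) y = bscal c (bmul x y);
  bmul_scalr : forall c x y, bmul x (bscal c y) = bscal c (bmul x y);
  bmul_onel : forall x, bmul bone x = x;
  bmul_oner : forall x, bmul x bone = x;
  bnorm_mul : forall x y, bnorm (bmul x y) <= bnorm x * bnorm y;
  bnorm_one : bnorm bone = 1
}.

Arguments bzero {_}. Arguments bone {_}. Arguments badd {_}. Arguments bopp {_}.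
Arguments bmul {_}. Arguments bscal {_}. Arguments bnorm {_}.

Definition bsub {X : BanachAlgebra} (x y : X) : X := badd x (bopp y).

Fixpoint bpow {X : BanachAlgebra} (x : X) (n : nat) : X :=
  match n with
  | O => bone
  | S m => bmul x (bpow x m)
  end.

Fixpoint bsum {X : BanachAlgebra} (f : nat -> X) (n : nat) : X :=
  match n with
  | O => f O
  | S m => badd (bsum f m) (f (S m))
  end.

Definition invertible {X : BanachAlgebra} (b : X) : Prop :=
  exists c : X, bmul b c = bone /\ bmul c b = bone.

From Stdlib Require Import Reals Lra Lia Wf_nat.
Open Scope R_scope.

(* Write [z_m = y_(m+1) - b y_m] and let [d_i] be the defects of the
   characteristic equation truncated after [i] terms ([d_0 = 1],
   [d_(i+1) = b^(i+1) - (a_0 b^i + ... + a_i)]), so the hypotheses read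
   [d_(k+1) = 0] and [sigma + |d_1| + ... + |d_k| < 1].  The proof has three
   steps.
   1. Algebra: a telescoping identity expresses [y_(p+m+1)] through the [z]'s,
      the [y]'s and [d_(m+1)]; with [d_(k+1) = 0] the recurrence becomes
      [z_(n+k) = g_n(z_(n+k-1)) - (d_1 z_(n+k-1) + ... + d_k z_n)].
   2. Real sequences: a delay inequality [w_(n+k) <= sigma w_(n+k-1) +
      sum c_i w_(n+k-1-i)] with total weight [< 1] forces geometric decay, and
      so does a contraction [u_(m+1) <= beta u_m + v_m], [beta < 1], perturbed
      by a geometrically decaying [v].
   3. Taking norms, [|z_m|] decays geometrically by step 2, hence so does
      [|y_m|] because [y_(m+1) = z_m + b y_m] and [|b| < 1]. *)

Arguments badd_assoc {_}. Arguments badd_comm {_}. Arguments badd_zero {_}.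
Arguments badd_opp {_}. Arguments bscal_one {_}. Arguments bscal_addl {_}.
Arguments bnorm_ge0 {_}. Arguments bnorm_triangle {_}. Arguments bnorm_scal {_}.
Arguments bmul_assoc {_}. Arguments bmul_addl {_}. Arguments bmul_addr {_}.
Arguments bmul_onel {_}. Arguments bmul_oner {_}. Arguments bnorm_mul {_}.

Section AlgebraFacts.
Context {X : BanachAlgebra}.
Implicit Types x y z w : X.

Lemma badd_0l x : badd bzero x = x.
Proof. rewrite badd_comm; apply badd_zero. Qed.

Lemma badd_oppl x : badd (bopp x) x = bzero.
Proof. rewrite badd_comm; apply badd_opp. Qed.

Lemma bsubK x y : badd (bsub x y) y = x.
Proof. unfold bsub. rewrite <- badd_assoc, badd_oppl, badd_zero. reflexivity. Qed.

Lemma baddK x y : bsub (badd x y) y = x.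
Proof. unfold bsub. rewrite <- badd_assoc, badd_opp, badd_zero. reflexivity. Qed.

Lemma badd_cancel_l x y z : badd x y = badd x z -> y = z.
Proof.
  intro H. rewrite <- (badd_0l y), <- (badd_0l z), <- (badd_oppl x), <- !badd_assoc, H.
  reflexivity.
Qed.

Lemma badd_cancel_r x y z : badd y x = badd z x -> y = z.
Proof. rewrite !(badd_comm _ x). apply badd_cancel_l. Qed.

Lemma badd_move_r x y z : badd x y = z -> x = bsub z y.
Proof. intros <-. symmetry. apply baddK. Qed.

Lemma badd_perm x y z w : badd (badd x y) (badd z w) = badd (badd x z) (badd y w).
Proof.
  rewrite <- !badd_assoc. f_equal. rewrite !badd_assoc. f_equal. apply badd_comm.
Qed.

Lemma bopp_unique x y : badd x y = bzero -> y = bopp x.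
Proof. intro H. apply (badd_cancel_l x). rewrite H, badd_opp. reflexivity. Qed.

Lemma bopp_add x y : bopp (badd x y) = badd (bopp x) (bopp y).
Proof.
  symmetry. apply bopp_unique.
  rewrite badd_perm, !badd_opp. apply badd_zero.
Qed.

Lemma bsub_addr x y z : bsub x (badd y z) = bsub (bsub x y) z.
Proof. unfold bsub. rewrite bopp_add. apply badd_assoc. Qed.

Lemma bmul_0l x : bmul bzero x = bzero.
Proof.
  apply (badd_cancel_l (bmul bzero x)). rewrite <- bmul_addl, !badd_zero. reflexivity.
Qed.

Lemma bmul_subl x y z : bmul (bsub x y) z = bsub (bmul x z) (bmul y z).
Proof.
  apply badd_move_r. rewrite <- bmul_addl, bsubK. reflexivity.
Qed.

Lemma bnorm_opp x : bnorm (bopp x) = bnorm x.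
Proof.
  assert (Hopp : bopp x = bscal (-1) x).
  { symmetry. apply bopp_unique. rewrite <- (bscal_one x) at 1.
    rewrite <- bscal_addl, Rplus_opp_r.
    apply (badd_cancel_l (bscal 0 x)). rewrite <- bscal_addl, Rplus_0_r, badd_zero.
    reflexivity. }
  rewrite Hopp, bnorm_scal, Rabs_left by lra. ring.
Qed.

Lemma bnorm_sub x y : bnorm (bsub x y) <= bnorm x + bnorm y.
Proof. unfold bsub. rewrite <- (bnorm_opp y). apply bnorm_triangle. Qed.

Lemma bpow_succ_r x n : bmul (bpow x n) x = bpow x (S n).
Proof.
  induction n as [|n IH]; simpl.
  - rewrite bmul_onel, bmul_oner. reflexivity.
  - rewrite <- bmul_assoc, IH. reflexivity.
Qed.

Lemma bsum_ext (f h : nat -> X) n :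
  (forall j, (j <= n)%nat -> f j = h j) -> bsum f n = bsum h n.
Proof.
  induction n as [|n IH]; intro H; simpl.
  - apply H; lia.
  - rewrite IH, H by (intros; try apply H; lia). reflexivity.
Qed.

Lemma bsum_mulr (f : nat -> X) c n :
  bmul (bsum f n) c = bsum (fun j => bmul (f j) c) n.
Proof. induction n as [|n IH]; simpl; [|rewrite bmul_addl, IH]; reflexivity. Qed.

Lemma bsum_first (f : nat -> X) n :
  bsum f (S n) = badd (f O) (bsum (fun i => f (S i)) n).
Proof.
  induction n as [|n IH]; [reflexivity|].
  change (bsum f (S (S n))) with (badd (bsum f (S n)) (f (S (S n)))).
  rewrite IH. simpl. symmetry. apply badd_assoc.
Qed.

Lemma bnorm_bsum (f : nat -> X) n :
  bnorm (bsum f n) <= sum_f_R0 (fun i => bnorm (f i)) n.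
Proof.
  induction n as [|n IH]; simpl; [lra|].
  eapply Rle_trans; [apply bnorm_triangle|lra].
Qed.

End AlgebraFacts.

Section Telescoping.
Context {X : BanachAlgebra}.
Variables (a : nat -> X) (b : X) (y : nat -> X).

(* The hypothesis
   of the theorem says [d_(k+1) = 0] and [|d_1| + ... + |d_k| < 1 - sigma]. *)
Definition char_defect (i : nat) : X :=
  match i with
  | O => bone
  | S i => bsub (bpow b (S i)) (bsum (fun j => bmul (a j) (bpow b (i - j))) i)
  end.

Lemma char_defect_step m : bmul (char_defect m) b = badd (char_defect (S m)) (a m).
Proof.
  destruct m as [|m]; unfold char_defect.
  - simpl. rewrite bmul_onel, !bmul_oner, bsubK. reflexivity.
  - rewrite bmul_subl, bpow_succ_r, bsum_mulr.
    change (bsum ?f (S m)) with (badd (bsum f m) (f (S m))).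
    cbv beta. rewrite Nat.sub_diag. change (bpow b 0) with (@bone X). rewrite bmul_oner.
    rewrite (bsum_ext _ (fun j => bmul (a j) (bpow b (S m - j)))).
    2:{ intros j Hj. rewrite <- bmul_assoc, bpow_succ_r. do 3 f_equal. lia. }
    rewrite bsub_addr, bsubK. reflexivity.
Qed.

Definition bdiff (p : nat) : X := bsub (y (S p)) (bmul b (y p)).

Lemma telescope m : forall p,
  y (S (p + m)) =
  badd (badd (bsum (fun i => bmul (char_defect i) (bdiff (p + m - i))) m)
             (bsum (fun j => bmul (a j) (y (p + m - j))) m))
       (bmul (char_defect (S m)) (y p)).
Proof.
  induction m as [|m IH]; intro p.
  - simpl bsum. rewrite !Nat.add_0_r, Nat.sub_0_r, bmul_onel, <- badd_assoc,
      <- bmul_addl, (badd_comm (a 0)), <- char_defect_step.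
    change (char_defect 0) with (@bone X). rewrite bmul_onel.
    unfold bdiff. rewrite bsubK. reflexivity.
  - (* Apply the identity at [p+1] and expand [d_(m+1) y_(p+1)]. *)
    replace (p + S m)%nat with (S p + m)%nat by lia. rewrite IH.
    assert (Hlast : bmul (char_defect (S m)) (y (S p)) =
      badd (bmul (char_defect (S m)) (bdiff p))
           (badd (bmul (a (S m)) (y p)) (bmul (char_defect (S (S m))) (y p)))).
    { rewrite <- (bsubK (y (S p)) (bmul b (y p))) at 1. fold (bdiff p).
      rewrite bmul_addr, bmul_assoc, char_defect_step, bmul_addl, (badd_comm (bmul _ (y p))).
      reflexivity. }
    rewrite Hlast, (badd_assoc (bmul (char_defect (S m)) (bdiff p))), badd_assoc.
    cbn [bsum]. f_equal.
    replace (S p + m - S m)%nat with p by lia. apply badd_perm.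
Qed.

Lemma bdiff_recurrence (K : nat) (f : nat -> X)
  (hchar : char_defect (S (S K)) = bzero)
  (hrec : forall n, y (n + S K + 1)%nat =
            badd (bsum (fun j => bmul (a j) (y (n + S K - j)%nat)) (S K)) (f n))
  (n : nat) :
  bdiff (n + S K) =
  bsub (f n) (bsum (fun i => bmul (char_defect (S i)) (bdiff (n + K - i))) K).
Proof.
  apply badd_move_r.
  assert (Htel := telescope (S K) n).
  rewrite hchar, bmul_0l, badd_zero, <- Nat.add_1_r, hrec, (badd_comm _ (f n)) in Htel.
  apply badd_cancel_r in Htel.
  rewrite Htel, bsum_first, Nat.sub_0_r. change (char_defect 0) with (@bone X).
  rewrite bmul_onel.
  f_equal. apply bsum_ext. intros i _. do 2 f_equal. lia.
Qed.

End Telescoping.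

Definition geom_bounded (u : nat -> R) : Prop :=
  exists C rho, 0 <= C /\ 0 <= rho < 1 /\ forall m, u m <= C * rho ^ m.

Lemma geom_bounded_cv (u : nat -> R) :
  (forall m, 0 <= u m) -> geom_bounded u -> Un_cv u 0.
Proof.
  intros Hu0 (C & rho & HC & Hrho & Hu) eps Heps.
  destruct (pow_lt_1_zero rho) with (y := eps / (C + 1)) as [N HN].
  { rewrite Rabs_right; lra. }
  { apply Rdiv_lt_0_compat; lra. }
  exists N. intros n Hn. unfold R_dist.
  rewrite Rminus_0_r, Rabs_right by (apply Rle_ge, Hu0).
  specialize (HN n Hn). rewrite Rabs_right in HN by (apply Rle_ge, pow_le; lra).
  assert (Hpow : 0 <= rho ^ n) by (apply pow_le; lra).
  apply (Rle_lt_trans _ (C * rho ^ n)); [apply Hu|].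
  apply (Rle_lt_trans _ ((C + 1) * rho ^ n)); [nra|].
  replace eps with ((C + 1) * (eps / (C + 1))) by (field; lra).
  apply Rmult_lt_compat_l; lra.
Qed.

Lemma pow_le_decr r m n : 0 <= r <= 1 -> (m <= n)%nat -> r ^ n <= r ^ m.
Proof.
  intros Hr Hmn. replace n with (m + (n - m))%nat by lia. rewrite pow_add.
  assert (0 <= r ^ m) by (apply pow_le; lra).
  assert (r ^ (n - m) <= 1) by (rewrite <- (pow1 (n - m)); apply pow_incr; lra).
  nra.
Qed.

Lemma bernoulli_ineq t n : 0 <= t <= 1 -> 1 - INR n * t <= (1 - t) ^ n.
Proof.
  intro Ht. induction n as [|n IH]; [simpl; lra|].
  rewrite S_INR. change ((1 - t) ^ S n) with ((1 - t) * (1 - t) ^ n).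
  assert (0 <= INR n) by apply pos_INR. nra.
Qed.

Lemma root_below_one q K : 0 <= q < 1 -> exists r, 0 < r < 1 /\ q <= r ^ S K.
Proof.
  intro Hq. set (t := (1 - q) / INR (S (S K))).
  assert (HK : 2 <= INR (S (S K))).
  { rewrite !S_INR. pose proof (pos_INR K). lra. }
  assert (Ht : 0 < t <= (1 - q) / 2).
  { unfold t. split; [apply Rdiv_lt_0_compat; lra|].
    apply Rmult_le_compat_l; [lra|]. apply Rinv_le_contravar; lra. }
  exists (1 - t). split; [lra|].
  eapply Rle_trans; [|apply bernoulli_ineq; lra].
  assert (Hmul : INR (S K) * t <= 1 - q).
  { unfold t. rewrite (S_INR (S K)) in *. pose proof (pos_INR (S K)).
    apply (Rmult_le_reg_r (INR (S K) + 1)); [lra|].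
    replace (INR (S K) * ((1 - q) / (INR (S K) + 1)) * (INR (S K) + 1))
      with (INR (S K) * (1 - q)) by (field; lra).
    nra. }
  lra.
Qed.

Lemma sum_f_R0_term_le (f : nat -> R) N i :
  (forall j, 0 <= f j) -> (i <= N)%nat -> f i <= sum_f_R0 f N.
Proof.
  intros Hf Hi. induction N as [|N IH]; simpl.
  - replace i with O by lia. lra.
  - destruct (Nat.eq_dec i (S N)) as [->|Hne].
    + pose proof (cond_pos_sum f N Hf). lra.
    + specialize (IH ltac:(lia)). specialize (Hf (S N)). lra.
Qed.

(* Delay inequality (step 2): if [w_(n+k) <= sigma w_(n+k-1) + c_0 w_(n+k-1) + ... +
   c_(k-1) w_n] (with [k = K+1]) and [sigma + c_0 + ... + c_(k-1) < 1], then
   [w] decays geometrically, with ratio any [r < 1] such that [r^k] dominates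
   the total weight. *)
Lemma delay_ineq_geom (w c : nat -> R) (sigma : R) (K : nat) :
  (forall m, 0 <= w m) -> (forall i, 0 <= c i) -> 0 <= sigma ->
  sigma + sum_f_R0 c K < 1 ->
  (forall n, w (n + S K)%nat <=
             sigma * w (n + K)%nat + sum_f_R0 (fun i => c i * w (n + K - i)%nat) K) ->
  geom_bounded w.
Proof.
  intros Hw0 Hc0 Hsigma Hq Hdelay.
  set (q := sigma + sum_f_R0 c K).
  assert (Hq0 : 0 <= q) by (pose proof (cond_pos_sum c K Hc0); unfold q; lra).
  destruct (root_below_one q K) as (r & Hr & Hqr); [unfold q in *; lra|].
  assert (HrK : 0 < r ^ K) by (apply pow_lt; lra).
  set (B := sum_f_R0 w K / r ^ K).
  assert (HB : 0 <= B) by (apply Rle_mult_inv_pos; [apply cond_pos_sum|]; auto).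
  exists B, r. split; [exact HB|]. split; [lra|].
  intro m. induction m as [m IH] using lt_wf_ind.
  assert (Hmono : forall i j, (i <= j)%nat -> B * r ^ j <= B * r ^ i).
  { intros i j Hij. apply Rmult_le_compat_l; [exact HB|]. apply pow_le_decr; [lra|lia]. }
  destruct (Nat.le_gt_cases m K) as [HmK|HmK].
  - (* initial window: bounded by the sum of the first [k] values *)
    apply (Rle_trans _ (sum_f_R0 w K)); [apply sum_f_R0_term_le; auto|].
    replace (sum_f_R0 w K) with (B * r ^ K) by (unfold B; field; lra).
    apply Hmono. exact HmK.
  - (* step: all delayed values are below [B r^n], and [q <= r^k] *)
    replace m with (m - S K + S K)%nat by lia. set (n := (m - S K)%nat).
    assert (Hn : 0 <= B * r ^ n) by (apply Rmult_le_pos; [|apply pow_le]; lra).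
    assert (Hlast : w (n + K)%nat <= B * r ^ n).
    { eapply Rle_trans; [apply IH; unfold n; lia|apply Hmono; lia]. }
    assert (Hsum : sum_f_R0 (fun i => c i * w (n + K - i)%nat) K
                   <= sum_f_R0 c K * (B * r ^ n)).
    { rewrite Rmult_comm, scal_sum. apply sum_Rle. intros i Hi.
      apply Rmult_le_compat_l; [auto|].
      eapply Rle_trans; [apply IH; unfold n; lia|apply Hmono; lia]. }
    eapply Rle_trans; [apply Hdelay|].
    replace (B * r ^ (n + S K)) with (r ^ S K * (B * r ^ n)) by (rewrite pow_add; ring).
    assert (q * (B * r ^ n) <= r ^ S K * (B * r ^ n)) by (apply Rmult_le_compat_r; auto).
    assert (sigma * w (n + K)%nat <= sigma * (B * r ^ n)) by (apply Rmult_le_compat_l; lra).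
    unfold q in *. lra.
Qed.

Lemma perturbed_contraction_geom (u v : nat -> R) (beta : R) :
  0 <= beta < 1 -> (forall m, 0 <= u m) -> geom_bounded v ->
  (forall m, u (S m) <= beta * u m + v m) -> geom_bounded u.
Proof.
  intros Hbeta Hu0 (B & r & HB & Hr & Hv) Hstep.
  set (rho := Rmax r ((1 + beta) / 2)).
  assert (Hrho : r <= rho /\ (1 + beta) / 2 <= rho /\ rho < 1).
  { split; [apply Rmax_l|]. split; [apply Rmax_r|]. apply Rmax_lub_lt; lra. }
  set (C := u O + B / (rho - beta)).
  assert (HBC : 0 <= B / (rho - beta) /\ B <= C * (rho - beta)).
  { assert (B / (rho - beta) * (rho - beta) = B) by (field; lra).
    split; [apply Rle_mult_inv_pos; lra|]. pose proof (Hu0 O). unfold C. nra. }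
  exists C, rho. split; [pose proof (Hu0 O); unfold C; lra|]. split; [lra|].
  induction m as [|m IH]; [simpl; unfold C; lra|].
  assert (Hpow : 0 <= rho ^ m) by (apply pow_le; lra).
  assert (Hvm : v m <= B * rho ^ m).
  { eapply Rle_trans; [apply Hv|]. apply Rmult_le_compat_l; [exact HB|].
    apply pow_incr; lra. }
  eapply Rle_trans; [apply Hstep|]. simpl.
  assert (beta * u m <= beta * (C * rho ^ m)) by (apply Rmult_le_compat_l; lra).
  nra.
Qed.

Theorem corollary2 (X : BanachAlgebra) (k : nat) (hk : (1 <= k)%nat)
  (g : nat -> X -> X) (sigma : R) (hsigma : sigma > 0)
  (hg : forall n xi, bnorm (g n xi) <= sigma * bnorm xi)
  (a : nat -> X) (hak : a k <> bzero)
  (b : X) (hbinv : invertible b) (hb1 : bnorm b < 1)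
  (hchar : bsum (fun j => bmul (a j) (bpow b (k - j))) k = bpow b (S k))
  (hsum : sum_f_R0 (fun i =>
            bnorm (bsub (bpow b (S i)) (bsum (fun j => bmul (a j) (bpow b (i - j))) i)))
            (k - 1) < 1 - sigma)
  (y : nat -> X)
  (hy : forall n, y (n + k + 1)%nat =
          badd (bsum (fun j => bmul (a j) (y (n + k - j)%nat)) k)
               (g n (bsub (y (n + k)%nat) (bmul b (y (n + k - 1)%nat))))) :
  Un_cv (fun n => bnorm (y n)) 0.
Proof.
  destruct k as [|K]; [lia|].
  rewrite Nat.sub_succ, Nat.sub_0_r in hsum.
  assert (Hdefect : char_defect a b (S (S K)) = bzero).
  { unfold char_defect. rewrite hchar. apply badd_opp. }
  assert (Hdelay : forall n,
    bnorm (bdiff b y (n + S K)) <= sigma * bnorm (bdiff b y (n + K)) +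
      sum_f_R0 (fun i => bnorm (char_defect a b (S i)) * bnorm (bdiff b y (n + K - i))) K).
  { intro n. rewrite (bdiff_recurrence a b y K _ Hdefect hy n).
    eapply Rle_trans; [apply bnorm_sub|]. apply Rplus_le_compat.
    - replace (n + S K - 1)%nat with (n + K)%nat by lia.
      replace (n + S K)%nat with (S (n + K)) by lia. apply hg.
    - eapply Rle_trans; [apply bnorm_bsum|]. apply sum_Rle. intros i _. apply bnorm_mul. }
  assert (Hz : geom_bounded (fun m => bnorm (bdiff b y m))).
  { apply (delay_ineq_geom _ (fun i => bnorm (char_defect a b (S i))) sigma K);
      [intro; apply bnorm_ge0 | intro; apply bnorm_ge0 | lra |
       unfold char_defect; lra | exact Hdelay]. }
  assert (Hstep : forall m, bnorm (y (S m)) <= bnorm b * bnorm (y m) + bnorm (bdiff b y m)).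
  { intro m. rewrite <- (bsubK (y (S m)) (bmul b (y m))). fold (bdiff b y m).
    rewrite Rplus_comm. eapply Rle_trans; [apply bnorm_triangle|].
    apply Rplus_le_compat_l, bnorm_mul. }
  apply geom_bounded_cv; [intro; apply bnorm_ge0|].
  apply (perturbed_contraction_geom _ (fun m => bnorm (bdiff b y m)) (bnorm b));
    [split; [apply bnorm_ge0|lra] | intro; apply bnorm_ge0 | exact Hz | exact Hstep].
Qed.
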